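(* Let $S$ be a set of tasks reported as completed by an algorithm $A$ of type GroupLIS$(\beta)$ in a time interval $I$. Then at least $|S|-n$ of these tasks have their absolute task execution fully contained in $I$.
   Context: Model: $n$ processors with ids $1,\dots,n$ and a shared repository; tasks with ids, arrival times and costs are injected over time, processors may crash and restart. A task is pending if injected and its completion not yet reported. A processor repeatedly obtains the pending set, chooses a task, executes it (taking time proportional to its cost) and reports it; execution is non-preemptive and a crash loses progress. An absolute task execution of task $\tau$ is an interval $[t,t']$ such that a processor schedules $\tau$ at time $t$ and reports its completion at $t'$ without stopping its execution within $[t,t')$. An algorithm is of type GroupLIS$(\beta)$ if it partitions pending tasks into classes of equal cost, sorts each class in increasing order of arrival time, and whenever a class contains at least $\beta n^2$ pending tasks and a processor $p$ schedules a task from that class, it schedules the $(p\cdot\beta n)$-th task of the class. *)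

From mathcomp Require Import all_boot all_order all_algebra.
Set Implicit Arguments. Unset Strict Implicit. Unset Printing Implicit Defensive.
Import Order.TTheory GRing.Theory Num.Theory.
Local Open Scope ring_scope.

Section Model.
Variable R : archiRealFieldType.

Definition task := (nat * R * R)%type.
Definition tid (x : task) : nat := x.1.1.
Definition arr (x : task) : R := x.1.2.
Definition cost (x : task) : R := x.2.

(* Events of a run; processors are identified by nat ids (valid ids: 1..n). *)
Inductive event :=
| Inject of task & R
| Sched of nat & task & R
| Report of nat & task & R
| Crash of nat & R
| Restart of nat & R.

Definition ev_time (e : event) : R :=
  match e with
  | Inject _ t | Sched _ _ t | Report _ _ t | Crash _ t | Restart _ t => t
  end.

Definition ev_proc_ok (n : nat) (e : event) : bool :=
  match e with
  | Inject _ _ => true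
  | Sched p _ _ | Report p _ _ | Crash p _ | Restart p _ => (1 <= p <= n)%N
  end.

Definition ev_dflt : event := Crash 0 0.

Definition injected (h : seq event) (x : task) : bool :=
  has (fun e => if e is Inject y _ then y == x else false) h.
Definition reported (h : seq event) (x : task) : bool :=
  has (fun e => if e is Report _ y _ then y == x else false) h.
Definition pending (h : seq event) : seq task :=
  undup [seq x <- [seq (if e is Inject y _ then y else (0%N, 0, 0)) | e <- h
                      & if e is Inject _ _ then true else false]
         | ~~ reported h x].

Definition before (x y : task) : bool :=
  (arr x < arr y) || ((arr x == arr y) && (tid x < tid y))%N.

(* GroupLIS(beta) rule for processor p choosing task x given pending set P:
   with C the class of pending tasks of cost (cost x), if |C| >= beta n^2
   then x is the (p * beta * n)-th task of C in the order above
   (position counted from 1; ceiling taken if p*beta*n is not integral). *)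
Definition grouplis_ok (n : nat) (beta : R) (P : seq task) (p : nat) (x : task)
  : bool :=
  let C := [seq y <- P | cost y == cost x] in
  (beta * (n ^ 2)%:R <= (size C)%:R) ==>
  ((count (fun y => before y x || (y == x)) C)%:Z
     == Num.ceil (p%:R * beta * n%:R)).

Inductive pstate := Idle | Busy of task & R | Down.

Definition pstate_eq (a b : pstate) : bool :=
  match a, b with
  | Idle, Idle | Down, Down => true
  | Busy x t, Busy y u => (x == y) && (t == u)
  | _, _ => false
  end.

Definition step (p : nat) (s : pstate) (e : event) : pstate :=
  match e with
  | Sched q x t => if q == p then Busy x t else s
  | Report q _ _ => if q == p then Idle else s
  | Crash q _ => if q == p then Down else s
  | Restart q _ => if q == p then Idle else s
  | Inject _ _ => s
  end.
Definition pstate_of (p : nat) (h : seq event) : pstate := foldl (step p) Idle h.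

Definition valid_event (n : nat) (beta : R) (h : seq event) (e : event) : bool :=
  ev_proc_ok n e &&
  match e with
  | Inject x t => (t == arr x) && ~~ injected h x
                  && all (fun y => (tid y == tid x) ==> (y == x))
                       [seq (if e is Inject y _ then y else x) | e <- h]
  | Sched p x t =>
      pstate_eq (pstate_of p h) Idle && (x \in pending h)
      && grouplis_ok n beta (pending h) p x
  | Report p x t =>
      (* execution takes time equal to the cost (unit speed) *)
      if pstate_of p h is Busy y t0 then (y == x) && (t == t0 + cost x)
      else false
  | Crash p _ => ~~ pstate_eq (pstate_of p h) Down
  | Restart p _ => pstate_eq (pstate_of p h) Down
  end.

(* A (finite prefix of a) run of a GroupLIS(beta) algorithm on n processors:
   events listed in order, with nondecreasing times, each one valid. *)
Definition grouplis_run (n : nat) (beta : R) (run : seq event) : Prop :=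
  sorted (fun e f => ev_time e <= ev_time f) run /\
  forall i, (i < size run)%N -> valid_event n beta (take i run) (nth ev_dflt run i).

Definition abs_exec (run : seq event) (x : task) (t t' : R) : Prop :=
  exists p i j, [/\ (i < j < size run)%N,
    nth ev_dflt run i = Sched p x t,
    nth ev_dflt run j = Report p x t' &
    forall k, (i < k < j)%N -> forall u, nth ev_dflt run k <> Crash p u].

Definition reported_in (run : seq event) (x : task) (I : interval R) : Prop :=
  exists p j t, [/\ (j < size run)%N, nth ev_dflt run j = Report p x t & t \in I].

Definition exec_within (run : seq event) (x : task) (I : interval R) : Prop :=
  exists t t', abs_exec run x t t' /\ (forall u, t <= u <= t' -> u \in I).

End Model.

(* A task of S that is reported in I but has no absolute execution inside I was
   reported by some processor p whose last uninterrupted execution of it was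
   scheduled outside I, hence before I.  Such a straddling execution is unique
   per processor: a later one would be scheduled after the earlier report, so
   between two times of I, hence inside I.  So at most n tasks of S lack an
   execution inside I. *)
From mathcomp Require Import all_boot all_order all_algebra.
From Stdlib Require Import ClassicalDescription ClassicalEpsilon.
Set Implicit Arguments. Unset Strict Implicit. Unset Printing Implicit Defensive.
Import Order.TTheory GRing.Theory Num.Theory.
Local Open Scope ring_scope.

Lemma mem_itv_between (d : Order.disp_t) (T : orderType d) (I : interval T)
    (a b c : T) :
  a \in I -> c \in I -> (a <= b)%O -> (b <= c)%O -> b \in I.
Proof.
case: I => l r; rewrite !itv_boundlr => /andP[la _] /andP[_ cu] ab bc.
by rewrite (le_trans la) ?(le_trans _ cu) //= ?leBSide.
Qed.

Lemma size_le_injective_labels (T : eqType) (B : seq T) (P : nat -> T -> Prop) n :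
  uniq B -> (forall x, x \in B -> exists2 p, (1 <= p <= n)%N & P p x) ->
  (forall p x y, P p x -> P p y -> x = y) -> (size B <= n)%N.
Proof.
move=> uB labelled P_inj.
have label_ex x : exists p, x \in B -> (1 <= p <= n)%N /\ P p x.
  case xB: (x \in B); last by exists 0%N.
  by have [p ??] := labelled x xB; exists p.
pose f x := proj1_sig (constructive_indefinite_description _ (label_ex x)).
have fP x : x \in B -> (1 <= f x <= n)%N /\ P (f x) x.
  by rewrite /f; case: constructive_indefinite_description.
have uniq_fB : uniq (map f B).
  rewrite map_inj_in_uniq // => a b aB bB fab.
  have [_ Pa] := fP a aB; have [_ Pb] := fP b bB.
  by rewrite fab in Pa; apply: P_inj Pa Pb.
rewrite -(size_map f) -[n](size_iota 1).
apply: uniq_leq_size => // _ /mapP[x xB ->].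
by have [/andP[p_ge1 p_len] _] := fP x xB; rewrite mem_iota p_ge1 add1n ltnS.
Qed.

Lemma step_Busy (R : archiRealFieldType) p (s : pstate R) e x t :
  step p s e = Busy x t -> e = Sched p x t \/ s = Busy x t.
Proof.
case: e => /=; try by right.
- by move=> q y u; case: eqP => [-> [-> ->]|_ ->]; [left | right].
- by move=> q y u; case: eqP => // _ ->; right.
- by move=> q u; case: eqP => // _ ->; right.
- by move=> q u; case: eqP => // _ ->; right.
Qed.

Section StraddlingExecutions.

Variables (R : archiRealFieldType) (n : nat) (beta : R) (run : seq (event R)).
Hypothesis run_ok : grouplis_run n beta run.

Local Notation ev i := (nth (ev_dflt R) run i).

Lemma pstate_of_take_nth p k : (k < size run)%N ->
  pstate_of p (take k.+1 run) = step p (pstate_of p (take k run)) (ev k).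
Proof. by move=> lt_k; rewrite (take_nth (ev_dflt R) lt_k) /pstate_of foldl_rcons. Qed.

Lemma Busy_scheduled p x t k :
  (k <= size run)%N -> pstate_of p (take k run) = Busy x t ->
  exists i, [/\ (i < k)%N, ev i = Sched p x t &
    forall m, (i < m <= k)%N -> pstate_of p (take m run) = Busy x t].
Proof.
elim: k => [|k IHk] le_k; first by rewrite take0.
rewrite pstate_of_take_nth // => /[dup] busy_k1 /step_Busy[sched_k|busy_k].
  exists k; split=> // m /andP[lt_km le_mk].
  have -> : m = k.+1 by apply/eqP; rewrite eqn_leq le_mk lt_km.
  by rewrite pstate_of_take_nth.
have [i [lt_ik sched_i busy_i]] := IHk (ltnW le_k) busy_k.
exists i; split=> [||m /andP[lt_im]]; [exact: ltnW | by [] |].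
rewrite leq_eqVlt ltnS => /predU1P[->|le_mk]; first by rewrite pstate_of_take_nth.
by apply: busy_i; rewrite lt_im.
Qed.

Lemma ev_time_le i j : (i < j < size run)%N -> ev_time (ev i) <= ev_time (ev j).
Proof.
case/andP=> lt_ij lt_j; have [sorted_run _] := run_ok.
have le_time_trans : transitive (fun e f : event R => ev_time e <= ev_time f).
  by move=> ???; apply: le_trans.
apply: (sorted_ltn_nth le_time_trans (ev_dflt R) sorted_run) => //.
by rewrite inE (ltn_trans lt_ij).
Qed.

(* A valid [Sched p] needs [p] idle, so it cannot fall inside a busy period of [p]. *)
Lemma Sched_after_busy p x y t u i j k :
  (forall m, (i < m <= j)%N -> pstate_of p (take m run) = Busy x t) ->
  (k < size run)%N -> ev k = Sched p y u -> (i < k)%N -> (j < k)%N.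
Proof.
move=> busy lt_k sched_k lt_ik; rewrite ltnNge; apply/negP => le_kj.
have := (proj2 run_ok) k lt_k; rewrite sched_k /= => /andP[_ /andP[/andP[]]].
by rewrite busy ?lt_ik.
Qed.

Definition straddles (I : interval R) p x :=
  exists i j t0 t, [/\ (i < j < size run)%N, ev i = Sched p x t0,
    ev j = Report p x t, (t \in I) && (t0 \notin I) &
    forall m, (i < m <= j)%N -> pstate_of p (take m run) = Busy x t0].

Lemma straddles_of_not_exec_within I x :
  reported_in run x I -> ~ exec_within run x I ->
  exists2 p, (1 <= p <= n)%N & straddles I p x.
Proof.
move=> [p [j [t [lt_j report_j tI]]]] not_within.
have := (proj2 run_ok) j lt_j; rewrite report_j /= => /andP[p_ok].
case busy_j: (pstate_of p (take j run)) => [|y t0|] //= /andP[/eqP yx _]; subst y.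
have [i [lt_ij sched_i busy_i]] := Busy_scheduled (ltnW lt_j) busy_j.
have ij_ok : (i < j < size run)%N by rewrite lt_ij.
have le_t0t : t0 <= t by have := ev_time_le ij_ok; rewrite sched_i report_j.
exists p => //.
case t0I: (t0 \in I); last by exists i, j, t0, t; rewrite tI t0I.
case: not_within; exists t0, t; split; last first.
  by move=> u /andP[]; apply: mem_itv_between.
exists p, i, j; split=> // k /andP[lt_ik lt_kj] u crash_k.
have := busy_i k.+1; rewrite (leqW lt_ik) lt_kj pstate_of_take_nth.
  by rewrite crash_k /= eqxx => /(_ isT).
exact: ltn_trans lt_j.
Qed.

Lemma no_straddle_after_report p x y i1 j1 t01 t1 i2 j2 t02 t2 (I : interval R) :
  (i1 < j1 < size run)%N -> ev j1 = Report p x t1 -> t1 \in I ->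
  (forall m, (i1 < m <= j1)%N -> pstate_of p (take m run) = Busy x t01) ->
  (i2 < j2 < size run)%N -> ev i2 = Sched p y t02 ->
  ev j2 = Report p y t2 -> t2 \in I -> t02 \notin I -> (i1 < i2)%N -> False.
Proof.
move=> /andP[_ lt_j1] report_j1 t1I busy1 /andP[lt_ij2 lt_j2] sched_i2
  report_j2 t2I /negP t02I lt_i12; apply: t02I.
have lt_i2 := ltn_trans lt_ij2 lt_j2.
have lt_j1i2 := Sched_after_busy busy1 lt_i2 sched_i2 lt_i12.
have le_t1t02 : t1 <= t02.
  by have := ev_time_le (i := j1) (j := i2); rewrite report_j1 sched_i2 lt_j1i2 lt_i2; apply.
have le_t02t2 : t02 <= t2.
  by have := ev_time_le (i := i2) (j := j2); rewrite sched_i2 report_j2 lt_ij2 lt_j2; apply.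
exact: mem_itv_between t1I t2I le_t1t02 le_t02t2.
Qed.

Lemma straddles_inj I p x y : straddles I p x -> straddles I p y -> x = y.
Proof.
move=> [i1 [j1 [t01 [t1 [ij1 sched1 report1 /andP[t1I t01I] busy1]]]]]
       [i2 [j2 [t02 [t2 [ij2 sched2 report2 /andP[t2I t02I] busy2]]]]].
case: (ltngtP i1 i2) => [lt_i12|lt_i21|eq_i12].
- by case: (no_straddle_after_report ij1 report1 t1I busy1 ij2 sched2 report2 t2I t02I lt_i12).
- by case: (no_straddle_after_report ij2 report2 t2I busy2 ij1 sched1 report1 t1I t01I lt_i21).
- by move: sched1; rewrite eq_i12 sched2 => -[].
Qed.

End StraddlingExecutions.

Theorem lemma10 (R : archiRealFieldType) (n : nat) (beta : R)
  (run : seq (event R)) (I : interval R) (S : seq (task R)) :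
  0 < beta ->
  grouplis_run n beta run ->
  uniq S ->
  (forall x, x \in S -> reported_in run x I) ->
  exists2 S' : seq (task R),
    [/\ uniq S', {subset S' <= S} & (size S - n <= size S')%N] &
    forall x, x \in S' -> exec_within run x I.
Proof.
move=> _ run_ok uniq_S reported_S.
pose within x : bool := excluded_middle_informative (exec_within run x I).
have withinP x : reflect (exec_within run x I) (within x).
  by rewrite /within; case: excluded_middle_informative => h; constructor.
exists (filter within S); last by move=> x; rewrite mem_filter => /andP[/withinP].
split; [exact: filter_uniq | by move=> x; rewrite mem_filter => /andP[] |].
have few_outside : (count (predC within) S <= n)%N.
  rewrite -size_filter; apply: (@size_le_injective_labels _ _ (straddles run I)).
  - exact: filter_uniq.
  - move=> x; rewrite mem_filter => /andP[/withinP not_within xS].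
    exact: (straddles_of_not_exec_within run_ok (reported_S x xS) not_within).
  - exact: (straddles_inj run_ok).
by rewrite leq_subLR -(count_predC within S) addnC size_filter leq_add2r.
Qed.
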